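(* Let $1\le\ell\le n$. For every $u\in\mathbb{R}^{\binom{n}{\ell}}$, $\|\mathbf{V}(u)\|_F^2\le \ell^2\|u\|^4$.
   Context: Vectors in $\mathbb{R}^{\binom{n}{\ell}}$ are indexed by subsets $S\subseteq[n]$ with $|S|=\ell$. The voting matrix $\mathbf{V}(u)$ is the symmetric $n\times n$ matrix with $\mathbf{V}_{ii}(u)=0$ and, for $i\ne j$, $\mathbf{V}_{ij}(u)=\frac12\sum_{|S|=|T|=\ell} u_Su_T\mathbf{1}_{S\triangle T=\{i,j\}}$. $\|\cdot\|_F$ is the Frobenius norm. *)

From mathcomp Require Import all_boot all_order all_algebra.
Set Implicit Arguments. Unset Strict Implicit. Unset Printing Implicit Defensive.
Import Order.TTheory GRing.Theory Num.Theory.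
Local Open Scope ring_scope.

(* The index set of R^{binom n l}: l-element subsets of [n] = 'I_n. *)
Definition lsubset (n l : nat) := {S : {set 'I_n} | #|S| == l}.

Definition lvec (R : numDomainType) (n l : nat) := {ffun lsubset n l -> R}.

Definition sqnorm (R : numDomainType) n l (u : lvec R n l) : R :=
  \sum_(S : lsubset n l) u S ^+ 2.

Definition voting (R : numFieldType) n l (u : lvec R n l) : 'M[R]_n :=
  \matrix_(i < n, j < n)
    (if i == j then 0
     else 2^-1 * \sum_(S : lsubset n l) \sum_(T : lsubset n l)
            (if (val S :\: val T) :|: (val T :\: val S) == [set i; j]
             then u S * u T else 0)).

Definition frob2 (R : numDomainType) n (A : 'M[R]_n) : R :=
  \sum_(i < n) \sum_(j < n) A i j ^+ 2.

From mathcomp Require Import all_boot all_order all_algebra.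
From mathcomp Require Import ring.
Set Implicit Arguments. Unset Strict Implicit. Unset Printing Implicit Defensive.
Import Order.TTheory GRing.Theory Num.Theory.
Local Open Scope ring_scope.

(* Extend u by zero to all subsets of [n] and put a_A(i) := u(A ∪ {i}) for
   i ∉ A, a_A(i) := 0 otherwise.  For i <> j, a set S pairs with
   T = S △ {i,j} in V_ij only if exactly one of i, j lies in S (otherwise
   |T| <> |S|), and then {S, T} = {A ∪ {i}, A ∪ {j}} with A = S \ {i,j};
   hence V agrees off the diagonal with the Gram matrix M = Σ_A a_A a_Aᵀ.
   By Cauchy-Schwarz, ‖M‖_F <= tr M = Σ_A ‖a_A‖², and every l-set is
   A ∪ {i} for exactly l pairs (A, i), so tr M = l ‖u‖². *)

Section CauchySchwarz.
Variables (R : realDomainType) (I : finType).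

Lemma lagrange_identity (x y : I -> R) :
  ((\sum_i x i ^+ 2) * (\sum_i y i ^+ 2) - (\sum_i x i * y i) ^+ 2) *+ 2
  = \sum_i \sum_j (x i * y j - x j * y i) ^+ 2.
Proof.
rewrite mulrnBl mulr2n {2}mulrC expr2 !big_distrlr /= -!sumrMnl -!big_split -sumrB.
apply: eq_bigr => i _; rewrite -!sumrMnl -!big_split -sumrB /=.
by apply: eq_bigr => j _ /=; ring.
Qed.

Lemma cauchy_schwarz (x y : I -> R) :
  (\sum_i x i * y i) ^+ 2 <= (\sum_i x i ^+ 2) * (\sum_i y i ^+ 2).
Proof.
rewrite -subr_ge0 -(pmulrn_lge0 _ (ltn0Sn 1)) lagrange_identity.
by apply: sumr_ge0 => i _; apply: sumr_ge0 => j _; apply: sqr_ge0.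
Qed.

Lemma sum_sqr_gram_le (J : finType) (a : J -> I -> R) :
  \sum_i \sum_i' (\sum_k a k i * a k i') ^+ 2 <= (\sum_k \sum_i a k i ^+ 2) ^+ 2.
Proof.
have gram_swap : \sum_i \sum_i' (\sum_k a k i * a k i') ^+ 2 =
                 \sum_k \sum_k' (\sum_i a k i * a k' i) ^+ 2.
  under eq_bigr => i _ do under eq_bigr => i' _ do rewrite expr2 big_distrlr.
  under eq_bigr => i _ do rewrite exchange_big.
  under eq_bigr => i _ do under eq_bigr => k _ do rewrite exchange_big.
  rewrite exchange_big; under eq_bigr => k _ do rewrite exchange_big.
  apply: eq_bigr => k _; apply: eq_bigr => k' _; rewrite expr2 big_distrlr.
  by apply: eq_bigr => i _; apply: eq_bigr => i' _; rewrite /= mulrACA.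
rewrite gram_swap [leRHS]expr2 big_distrlr /=.
by apply: ler_sum => k _; apply: ler_sum => k' _; apply: cauchy_schwarz.
Qed.

End CauchySchwarz.

Section SymmetricDifference.
Variables (V : nmodType) (n : nat).
Implicit Types (S T X A : {set 'I_n}) (i j : 'I_n).

Definition symdiff S T := (S :\: T) :|: (T :\: S).

Lemma symdiff_eq S T X : (symdiff S T == X) = (T == symdiff S X).
Proof.
apply/eqP/eqP => [<-|->]; apply/setP => x; rewrite !inE.
  all: by case: (x \in S); case: (x \in T); case: (x \in X).
Qed.

Lemma sum_symdiff_eq S X (F : {set 'I_n} -> V) :
  \sum_T (if symdiff S T == X then F T else 0) = F (symdiff S X).
Proof.
rewrite (bigD1 (symdiff S X)) //= symdiff_eq eqxx big1 ?addr0 // => T.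
by rewrite symdiff_eq => /negbTE ->.
Qed.

Lemma symdiff_setU1_pair i j A : i != j -> i \notin A -> j \notin A ->
  symdiff (i |: A) [set i; j] = j |: A.
Proof.
move=> ij iA jA; apply/setP => x; rewrite !inE.
have [->|xi] := eqVneq x i; first by rewrite (negbTE ij) (negbTE iA).
have [->|xj] := eqVneq x j; first by rewrite (negbTE jA) orbT.
by case: (x \in A).
Qed.

Lemma card_symdiff_pair i j S : i != j -> (i \in S) = (j \in S) ->
  #|symdiff S [set i; j]| != #|S|.
Proof.
move=> ij; rewrite neq_ltn; case iS: (i \in S) => /esym jS.
  suff /proper_card -> : symdiff S [set i; j] \proper S by [].
  apply/properP; split; last by exists i; rewrite ?inE ?iS ?eqxx.
  apply/subsetP => x; rewrite !inE; case xS: (x \in S) => //=; rewrite andbF /=.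
  by case/orP => /eqP xE; rewrite xE ?iS ?jS in xS.
suff /proper_card -> : S \proper symdiff S [set i; j] by rewrite orbT.
apply/properP; split; last by exists i; rewrite ?inE ?iS ?eqxx.
apply/subsetP => x xS; rewrite !inE xS andbT /=; apply/orP; left.
by apply/negP; case/orP => /eqP xE; rewrite xE ?iS ?jS in xS.
Qed.

Lemma sum_mem_setU1 i (F : {set 'I_n} -> V) :
  \sum_(S : {set 'I_n} | i \in S) F S = \sum_(A : {set 'I_n} | i \notin A) F (i |: A).
Proof.
rewrite (reindex_onto (fun A : {set 'I_n} => i |: A)
                      (fun S : {set 'I_n} => S :\ i)) /=; last exact: setD1K.
apply: eq_bigl => A; rewrite setU11 /=.
have [iA|iA] := boolP (i \in A); last by rewrite setU1K ?eqxx.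
by apply/negbTE/eqP => /setP/(_ i); rewrite !inE eqxx iA.
Qed.

End SymmetricDifference.

Section LsubsetSums.
Variables (V : nmodType) (n l : nat).

Lemma sum_lsubset (F : {set 'I_n} -> V) :
  (forall S : {set 'I_n}, #|S| != l -> F S = 0) ->
  \sum_(s : lsubset n l) F (val s) = \sum_(S : {set 'I_n}) F S.
Proof.
move=> F0; rewrite -(big_sub (fun S : {set 'I_n} => #|S| == l)).
by rewrite [RHS](bigID (fun S : {set 'I_n} => #|S| == l)) /= [X in _ + X]big1 ?addr0.
Qed.

End LsubsetSums.

Section Extension.
Variables (R : numFieldType) (n l : nat) (u : lvec R n l).
Implicit Types (S T A : {set 'I_n}) (i j : 'I_n).

Definition lext S : R := if insub S is Some s then u s else 0.

Lemma lext_val (s : lsubset n l) : lext (val s) = u s.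
Proof. by rewrite /lext valK. Qed.

Lemma lext_card S : #|S| != l -> lext S = 0.
Proof. by move=> Sl; rewrite /lext insubN. Qed.

Lemma lext_mul_card S T : #|S| != #|T| -> lext S * lext T = 0.
Proof.
have [Sl|/lext_card->] := eqVneq #|S| l; last by rewrite mul0r.
by rewrite Sl eq_sym => /lext_card->; rewrite mulr0.
Qed.

Lemma sqnorm_lext : sqnorm u = \sum_S lext S ^+ 2.
Proof.
rewrite -(sum_lsubset (l := l)) => [|S /lext_card->]; last by rewrite expr0n.
by apply: eq_bigr => s _; rewrite lext_val.
Qed.

Lemma voting_lext i j : i != j ->
  voting u i j = 2^-1 * \sum_S lext S * lext (symdiff S [set i; j]).
Proof.
move=> ij; rewrite mxE (negbTE ij); congr (_ * _).
pose G S T := if symdiff S T == [set i; j] then lext S * lext T else 0.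
transitivity (\sum_S \sum_T G S T); last first.
  by apply: eq_bigr => S _; rewrite sum_symdiff_eq.
rewrite -(sum_lsubset (l := l)) => [|S /lext_card S0]; last first.
  by apply: big1 => T _; rewrite /G S0 mul0r if_same.
apply: eq_bigr => s _; rewrite -(sum_lsubset (l := l)) => [|T /lext_card T0]; last first.
  by rewrite /G T0 mulr0 if_same.
by apply: eq_bigr => t _; rewrite /G !lext_val.
Qed.

Definition coface A i : R := if i \in A then 0 else lext (i |: A).

Lemma sum_lext_symdiff_mem_notin i j : i != j ->
  \sum_(S : {set 'I_n} | (i \in S) && (j \notin S))
    lext S * lext (symdiff S [set i; j]) = \sum_(A : {set 'I_n}) coface A i * coface A j.
Proof.
move=> ij; rewrite big_mkcondr /= sum_mem_setU1.
rewrite [RHS](bigID (fun A => i \in A)) /= [X in _ = X + _]big1 ?add0r; last first.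
  by move=> A iA; rewrite /coface iA mul0r.
apply: eq_bigr => A iA; rewrite /coface (negbTE iA) in_setU1 eq_sym (negbTE ij) /=.
by have [//|jA] := boolP (j \in A); rewrite ?mulr0 // symdiff_setU1_pair.
Qed.

Lemma sum_lext_symdiff_pair i j : i != j ->
  \sum_S lext S * lext (symdiff S [set i; j]) =
  (\sum_(A : {set 'I_n}) coface A i * coface A j) *+ 2.
Proof.
move=> ij.
rewrite (bigID (fun S => (i \in S) == (j \in S))) /= big1 ?add0r; last first.
  by move=> S /eqP ijS; rewrite mulrC lext_mul_card // card_symdiff_pair.
rewrite (bigID (fun S => i \in S)) /= mulr2n; congr (_ + _).
  rewrite -(sum_lext_symdiff_mem_notin ij); apply: eq_bigl => S.
  by case: (i \in S); case: (j \in S).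
have ji : j != i by rewrite eq_sym.
rewrite (setUC [set i]) [in RHS](eq_bigr (fun A => coface A j * coface A i)); last first.
  by move=> A _; rewrite mulrC.
rewrite -(sum_lext_symdiff_mem_notin ji); apply: eq_bigl => S.
by case: (i \in S); case: (j \in S).
Qed.

Lemma voting_coface i j : i != j ->
  voting u i j = \sum_(A : {set 'I_n}) coface A i * coface A j.
Proof.
move=> ij; rewrite voting_lext // sum_lext_symdiff_pair // -[X in _ * X]mulr_natl mulrA.
by rewrite mulVf ?mul1r ?pnatr_eq0.
Qed.

Lemma sum_coface_sqr : \sum_(A : {set 'I_n}) \sum_i coface A i ^+ 2 = l%:R * sqnorm u.
Proof.
have coface_sqr i : \sum_(A : {set 'I_n}) coface A i ^+ 2 =
                    \sum_(S : {set 'I_n} | i \in S) lext S ^+ 2.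
  rewrite sum_mem_setU1 (bigID (fun A => i \in A)) /= big1 ?add0r => [|A iA].
    by apply: eq_bigr => A iA; rewrite /coface (negbTE iA).
  by rewrite /coface iA expr0n.
rewrite exchange_big /= (eq_bigr _ (fun i _ => coface_sqr i)) sqnorm_lext mulr_sumr.
under eq_bigr do rewrite big_mkcond.
rewrite exchange_big; apply: eq_bigr => S _; rewrite -big_mkcond sumr_const /=.
have [->|/lext_card->] := eqVneq #|S| l; first by rewrite mulr_natl.
by rewrite expr0n mul0rn mulr0.
Qed.

End Extension.

Lemma frob2_voting_le (R : realFieldType) n l (u : lvec R n l) :
  frob2 (voting u) <=
  \sum_i \sum_j (\sum_(A : {set 'I_n}) coface u A i * coface u A j) ^+ 2.
Proof.
apply: ler_sum => i _; apply: ler_sum => j _.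
have [<-|ij] := eqVneq i j; last by rewrite voting_coface.
by rewrite mxE eqxx expr0n sqr_ge0.
Qed.

Theorem lemma6 (R : realFieldType) (n l : nat) (hl1 : (1 <= l)%N) (hln : (l <= n)%N)
  (u : lvec R n l) :
  frob2 (voting u) <= (l ^ 2)%:R * sqnorm u ^+ 2.
Proof.
apply: (le_trans (frob2_voting_le u)).
rewrite natrX -exprMn -sum_coface_sqr.
exact: (sum_sqr_gram_le (coface u)).
Qed.
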